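(* Let $\langle\{a,b\},C,d,O,v,\{<,<^{-1}\}\rangle$ be a two-player infinite sequential game where $O$ is finite, $<$ is a strict linear order on $O$, player $a$ has preference $<$ and player $b$ has preference $<^{-1}$. Let $\Gamma\subseteq\mathcal{P}(C^\omega)$ and assume: (1) for all $O'\subseteq O$ and $\gamma\in C^*$, $\{\alpha\in C^\omega\mid v(\gamma\alpha)\in O'\}\in\Gamma$; (2) the win-lose game $\langle C,D,W\rangle$ is determined for all $W\in\Gamma$ and $D\subseteq C^*$. Then the game has a subgame perfect equilibrium.
   Context: $C$ is a non-empty set of choices, $d:C^*\to\{a,b\}$ assigns the chooser after each history, $v:C^\omega\to O$. A strategy of $X$ is a function $s:d^{-1}(\{X\})\to C$; a profile is identified with $\sigma:C^*\to C$. For $\gamma\in C^*$, the play $p^\gamma(\sigma)$ is given by $p_n=\gamma_n$ for $n<|\gamma|$ and $p_n=\sigma(p_{<n})$ otherwise. $\sigma$ is a subgame perfect equilibrium if there are no $\gamma\in C^*$, player $X$ and strategy $s$ of $X$ with $v(p^\gamma(\sigma))\prec_X v(p^\gamma(\sigma_{X\mapsto s}))$, where $\prec_a={<}$, $\prec_b={<^{-1}}$ and $\sigma_{X\mapsto s}$ agrees with $s$ on $d^{-1}(\{X\})$ and with $\sigma$ elsewhere. The win-lose game $\langle C,D,W\rangle$ is the two-player game where the first player chooses after histories in $D$, the second after histories in $C^*\setminus D$, and the first player wins iff the play lies in $W$; it is determined if one player has a winning strategy. *)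

From mathcomp Require Import all_boot all_order.
Set Implicit Arguments. Unset Strict Implicit. Unset Printing Implicit Defensive.
Import Order.TTheory.

Inductive player := pa | pb.

Definition player_eq_dec (x y : player) : {x = y} + {x <> y}.
Proof. decide equality. Defined.

Section Games.
Variable C : Type.

Definition prepend (g : seq C) (al : nat -> C) : nat -> C :=
  fun n => if n < size g then nth (al 0) g n else al (n - size g).

(* the history of length |gamma| + k along the play p^gamma(sigma) *)
Fixpoint ext (g : seq C) (sigma : seq C -> C) (k : nat) : seq C :=
  match k with
  | 0 => g
  | k'.+1 => rcons (ext g sigma k') (sigma (ext g sigma k'))
  end.

Definition play (g : seq C) (sigma : seq C -> C) : nat -> C :=
  fun n => if n < size g then nth (sigma [::]) g n
           else sigma (ext g sigma (n - size g)).

Variable d : seq C -> player.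

Definition strategy (X : player) := {h : seq C | d h = X} -> C.

Definition deviate (sigma : seq C -> C) (X : player) (s : strategy X) : seq C -> C :=
  fun h => match player_eq_dec (d h) X with
           | left e => s (exist _ h e)
           | right _ => sigma h
           end.

Arguments deviate sigma X s h : clear implicits.

Variables (disp : Order.disp_t) (O : orderType disp).
Variable v : (nat -> C) -> O.

Definition prefers (X : player) (o1 o2 : O) : bool :=
  match X with pa => (o1 < o2)%O | pb => (o2 < o1)%O end.

Definition SPE (sigma : seq C -> C) : Prop :=
  ~ exists (g : seq C) (X : player) (s : strategy X),
      prefers X (v (play g sigma)) (v (play g (deviate sigma X s))).

End Games.

Section WinLose.
Variable C : Type.

Definition pre (p : nat -> C) (n : nat) : seq C := mkseq p n.

Definition wl_outcome (D : seq C -> Prop) (s1 : {h : seq C | D h} -> C)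
  (s2 : {h : seq C | ~ D h} -> C) (p : nat -> C) : Prop :=
  forall n, (forall H : D (pre p n), p n = s1 (exist _ (pre p n) H)) /\
            (forall H : ~ D (pre p n), p n = s2 (exist _ (pre p n) H)).

Definition first_wins (D : seq C -> Prop) (W : (nat -> C) -> Prop) : Prop :=
  exists s1 : {h : seq C | D h} -> C,
    forall (s2 : {h : seq C | ~ D h} -> C) p, wl_outcome s1 s2 p -> W p.

Definition second_wins (D : seq C -> Prop) (W : (nat -> C) -> Prop) : Prop :=
  exists s2 : {h : seq C | ~ D h} -> C,
    forall (s1 : {h : seq C | D h} -> C) p, wl_outcome s1 s2 p -> ~ W p.

Definition determined (D : seq C -> Prop) (W : (nat -> C) -> Prop) : Prop :=
  first_wins D W \/ second_wins D W.

End WinLose.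

From mathcomp Require Import all_boot all_order.
From Stdlib Require Import ClassicalEpsilon ProofIrrelevance FunctionalExtensionality Classical.
Set Implicit Arguments. Unset Strict Implicit. Unset Printing Implicit Defensive.
Import Order.TTheory.

(* Let [value g] be the best outcome that player a can guarantee from the
   history g (it exists since O is finite).  Determinacy of the win-lose game
   "the outcome exceeds [value g]" shows that b can in turn guarantee an
   outcome of at most [value g].  A single strategy of a that guarantees
   [value g] from every history g at once is obtained by persistence: at h, a
   follows the guaranteeing strategy of the earliest ancestor of h from which
   the value has stayed constant and which has been obeyed ever since.  Along
   any play the value never drops, so (O being finite) it is eventually
   constant; then the anchor can only move backwards, so it is eventually
   constant too, and the play eventually obeys one guaranteeing strategy.  The
   same construction for b, with the order reversed, yields a profile in which
   the outcome from any g is [value g] and a unilateral deviation still faces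
   the opponent's guarantee: a subgame perfect equilibrium. *)

Section Prefixes.
Variable C : Type.

Lemma size_pre (q : nat -> C) n : size (pre q n) = n.
Proof. exact: size_mkseq. Qed.

Lemma preS (q : nat -> C) n : pre q n.+1 = rcons (pre q n) (q n).
Proof. exact: mkseqS. Qed.

Lemma nth_pre x0 (q : nat -> C) n j : j < n -> nth x0 (pre q n) j = q j.
Proof. exact: nth_mkseq. Qed.

Lemma take_pre (q : nat -> C) i n : i <= n -> take i (pre q n) = pre q i.
Proof. by move=> le_in; rewrite /pre /mkseq -map_take take_iota (minn_idPl le_in). Qed.

Lemma pre_cat (q : nat -> C) (g : seq C) n :
  pre q (size g) = g -> pre q (size g + n) = g ++ pre (fun k => q (size g + k)) n.
Proof.
move=> qg; elim: n => [|n IH]; first by rewrite addn0 cats0.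
by rewrite addnS preS IH preS rcons_cat.
Qed.

Lemma prepend_drop (q : nat -> C) (g : seq C) :
  pre q (size g) = g -> prepend g (fun k => q (size g + k)) = q.
Proof.
move=> qg; apply: functional_extensionality => n; rewrite /prepend.
by case: ltnP => [lt_ng|le_gn]; [rewrite -[in LHS]qg nth_pre | rewrite subnKC].
Qed.

Lemma pre_play (g : seq C) sigma k :
  pre (play g sigma) (size g + k) = ext g sigma k.
Proof.
elim: k => [|k IH].
  rewrite addn0 /= -[RHS](mkseq_nth (sigma [::]) g) /pre /mkseq.
  apply/eq_in_map => i; rewrite mem_iota add0n => /andP[_ lt_ig].
  by rewrite /play lt_ig.
by rewrite addnS preS IH /= /play ltnNge leq_addr /= addKn -IH.
Qed.

Lemma pre_play_size (g : seq C) sigma : pre (play g sigma) (size g) = g.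
Proof. by rewrite -[X in pre _ X]addn0 pre_play. Qed.

Lemma play_next (g : seq C) sigma n :
  size g <= n -> play g sigma n = sigma (pre (play g sigma) n).
Proof. by move=> le_gn; rewrite -(subnKC le_gn) pre_play /play ltnNge leq_addr addKn. Qed.

End Prefixes.

Lemma take_rcons_le (T : Type) (h : seq T) x j :
  j <= size h -> take j (rcons h x) = take j h.
Proof.
move=> le_jh; rewrite -cats1 take_cat; case: ltnP => // le_hj.
by rewrite (@anti_leq j (size h)) ?le_jh // subnn take0 cats0 take_size.
Qed.

Lemma eventually_constant (T : Type) (R : T -> T -> Prop) (mu : T -> nat)
    (f : nat -> T) N0 :
  (forall x y z, R x y -> R y z -> R x z) -> (forall x, R x x) ->
  (forall x y, R x y -> x <> y -> mu y < mu x) ->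
  (forall n, N0 <= n -> R (f n) (f n.+1)) ->
  exists2 N, N0 <= N & forall m, N <= m -> f m = f N.
Proof.
move=> R_trans R_refl mu_decr Rf.
have R_far N k : N0 <= N -> R (f N) (f (N + k)).
  elim: k => [|k IH] le_N0N; first by rewrite addn0.
  by apply: R_trans (IH le_N0N) _; rewrite addnS; apply/Rf/(leq_trans le_N0N)/leq_addr.
suff: forall k N, N0 <= N -> mu (f N) < k ->
    exists2 N', N0 <= N' & forall m, N' <= m -> f m = f N'.
  by move=> H; apply: (H (mu (f N0)).+1 N0).
elim=> [|k IH] N le_N0N; first by rewrite ltn0.
rewrite ltnS => mu_le.
case: (classic (forall m, N <= m -> f m = f N)) => [const|]; first by exists N.
move=> /not_all_ex_not [m not_const]; have [le_Nm neq_m] := imply_to_and _ _ not_const.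
have := mu_decr _ _ (R_far N (m - N) le_N0N); rewrite subnKC // => /(_ (nesym neq_m)) lt_mu.
by apply: (IH m); [exact: leq_trans le_N0N le_Nm | exact: leq_trans lt_mu mu_le].
Qed.

Lemma nondecreasing_eventually_constant (disp : Order.disp_t) (O : finOrderType disp)
    (f : nat -> O) N0 :
  (forall n, N0 <= n -> (f n <= f n.+1)%O) ->
  exists2 N, N0 <= N & forall m, N <= m -> f m = f N.
Proof.
apply: (@eventually_constant O (fun x y => (x <= y)%O) (fun x => #|[set z | (x < z)%O]|)).
- by move=> x y z; apply: le_trans.
- by [].
move=> x y le_xy neq_xy; apply/proper_card/properP; split.
  by apply/subsetP => z; rewrite !inE; apply: le_lt_trans.
by exists y; rewrite !inE ?ltxx // lt_neqAle le_xy andbT; apply/eqP.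
Qed.

Lemma nonincreasing_eventually_constant (f : nat -> nat) N0 :
  (forall n, N0 <= n -> f n.+1 <= f n) ->
  exists2 N, N0 <= N & forall m, N <= m -> f m = f N.
Proof.
apply: (@eventually_constant nat (fun x y => y <= x) id).
- by move=> x y z le_yx le_zy; exact: leq_trans le_zy le_yx.
- by [].
by move=> x y le_yx neq_xy; rewrite ltn_neqAle le_yx andbT; apply/eqP => /esym.
Qed.

Definition pbool (P : Prop) : bool := if excluded_middle_informative P then true else false.

Lemma pboolP (P : Prop) : reflect P (pbool P).
Proof. by rewrite /pbool; case: excluded_middle_informative => H; constructor. Qed.

Section Guarantees.
Variables (C : Type) (d : seq C -> player) (O : Type) (v : (nat -> C) -> O).

Definition guarantees (X : player) (g : seq C) (t : seq C -> C) (P : O -> Prop) : Prop :=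
  forall q : nat -> C, pre q (size g) = g ->
    (forall n, size g <= n -> d (pre q n) = X -> q n = t (pre q n)) -> P (v q).

Lemma guarantees_impl X g t (P Q : O -> Prop) :
  (forall x, P x -> Q x) -> guarantees X g t P -> guarantees X g t Q.
Proof. by move=> PQ tP q qg qt; apply/PQ/(tP q qg qt). Qed.

Lemma guarantees_extend (c0 : C) X g h t P :
  guarantees X g t P -> size g <= size h -> take (size g) h = g ->
  (forall j, size g <= j < size h -> d (take j h) = X -> nth c0 h j = t (take j h)) ->
  guarantees X h t P.
Proof.
move=> tP le_gh hg ht q qh qt; apply: tP; first by rewrite -(take_pre _ le_gh) qh.
move=> n le_gn dX; have [lt_nh|] := ltnP n (size h); last by move=> le_hn; apply: qt.
have qn : pre q n = take n h by rewrite -qh take_pre // ltnW.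
rewrite qn -(nth_pre c0 q lt_nh) qh; rewrite qn in dX.
by apply: ht; rewrite ?le_gn.
Qed.

Lemma guarantees_play X g t sigma P :
  guarantees X g t P -> (forall h, d h = X -> sigma h = t h) -> P (v (play g sigma)).
Proof.
move=> tP sigma_t; apply: tP; first exact: pre_play_size.
by move=> n le_gn dX; rewrite play_next // sigma_t.
Qed.

Lemma first_wins_guarantees (c0 : C) g (Q : O -> Prop) :
  first_wins (fun h => d (g ++ h) = pa) (fun al => Q (v (prepend g al))) ->
  exists t, guarantees pa g t Q.
Proof.
move=> [s1 s1_wins].
exists (fun h => match excluded_middle_informative (d (g ++ drop (size g) h) = pa) with
   | left dh => s1 (exist _ (drop (size g) h) dh) | right _ => c0 end).
move=> q qg qt; rewrite -(prepend_drop qg).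
apply: (s1_wins (fun h => q (size g + size (proj1_sig h)))) => n; split => dn /=.
  rewrite (qt (size g + n)) ?leq_addr ?pre_cat // drop_size_cat //.
  by case: excluded_middle_informative => // dn'; rewrite (proof_irrelevance _ dn' dn).
by rewrite size_pre.
Qed.

Lemma second_wins_guarantees (c0 : C) g (Q : O -> Prop) :
  second_wins (fun h => d (g ++ h) = pa) (fun al => Q (v (prepend g al))) ->
  exists t, guarantees pb g t (fun x => ~ Q x).
Proof.
move=> [s2 s2_wins].
exists (fun h => match excluded_middle_informative (~ d (g ++ drop (size g) h) = pa) with
   | left dh => s2 (exist _ (drop (size g) h) dh) | right _ => c0 end).
move=> q qg qt; rewrite -(prepend_drop qg).
apply: (s2_wins (fun h => q (size g + size (proj1_sig h)))) => n; split => dn /=.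
  by rewrite size_pre.
have dpb : d (pre q (size g + n)) = pb by rewrite pre_cat //; case: (d _) dn.
rewrite (qt (size g + n) (leq_addr _ _) dpb) pre_cat // drop_size_cat //.
by case: excluded_middle_informative => // dn'; rewrite (proof_irrelevance _ dn' dn).
Qed.

End Guarantees.

Section Persistent.
Variables (C : Type) (c0 : C) (d : seq C -> player) (disp : Order.disp_t)
  (O : finOrderType disp) (v : (nat -> C) -> O) (X : player)
  (val : seq C -> O) (tw : seq C -> seq C -> C).
Hypothesis tw_guarantees : forall h, guarantees d v X h (tw h) (fun x => val h <= x)%O.
Hypothesis val_max :
  forall h t o, guarantees d v X h t (fun x => o <= x)%O -> (o <= val h)%O.

Definition anchored (h : seq C) (i : nat) : Prop :=
  [/\ i <= size h,
      forall j, i <= j <= size h -> val (take j h) = val h &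
      forall j, i <= j < size h -> d (take j h) = X ->
        nth c0 h j = tw (take i h) (take j h)].

Lemma anchored_size h : anchored h (size h).
Proof.
split=> // j; last by rewrite ltnNge => /andP[-> ].
by move=> /andP[le_hj le_jh]; rewrite (@anti_leq j (size h)) ?le_hj ?le_jh // take_size.
Qed.

Definition anchor (h : seq C) : nat :=
  ex_minn (ex_intro (fun i => pbool (anchored h i)) (size h)
                    (introT (pboolP _) (anchored_size h))).

Lemma anchor_anchored h : anchored h (anchor h).
Proof. by rewrite /anchor; case: ex_minnP => m /pboolP. Qed.

Lemma anchor_min h i : anchored h i -> anchor h <= i.
Proof. by rewrite /anchor; case: ex_minnP => m _ min_m /pboolP; apply: min_m. Qed.

Definition persistent (h : seq C) : C := tw (take (anchor h) h) h.

Lemma val_rcons_other h c : d h <> X -> (val h <= val (rcons h c))%O.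
Proof.
move=> dX; apply: (val_max (t := tw h)).
refine (guarantees_extend (c0 := c0) (@tw_guarantees h) _ _ _).
- by rewrite size_rcons.
- by rewrite take_rcons_le // take_size.
move=> j; rewrite size_rcons ltnS => /andP[le_hj le_jh].
by rewrite (@anti_leq j (size h)) ?le_hj ?le_jh // take_rcons_le // take_size.
Qed.

Lemma val_rcons_persistent h : d h = X -> (val h <= val (rcons h (persistent h)))%O.
Proof.
move=> dX; have [le_ah val_const moves] := anchor_anchored h.
rewrite -(val_const (anchor h)) ?leqnn ?le_ah //.
apply: val_max.
refine (guarantees_extend (c0 := c0) (@tw_guarantees (take (anchor h) h)) _ _ _).
- by rewrite size_takel // size_rcons (leq_trans le_ah (leqnSn _)).
- by rewrite size_takel // take_rcons_le.
move=> j; rewrite size_takel // size_rcons ltnS => /andP[le_aj le_jh].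
rewrite take_rcons_le // nth_rcons; case: ltnP => [lt_jh dj|le_hj].
  by apply: moves; rewrite ?le_aj.
by rewrite (@anti_leq j (size h)) ?le_jh ?le_hj // eqxx take_size.
Qed.

Section Play.
Variables (g : seq C) (q : nat -> C).
Hypothesis q_from_g : pre q (size g) = g.
Hypothesis q_persistent :
  forall n, size g <= n -> d (pre q n) = X -> q n = persistent (pre q n).

Lemma val_pre_nondecreasing n : size g <= n -> (val (pre q n) <= val (pre q n.+1))%O.
Proof.
move=> le_gn; rewrite preS; case: (player_eq_dec (d (pre q n)) X) => dX.
  by rewrite (q_persistent le_gn dX); apply: val_rcons_persistent.
exact: val_rcons_other.
Qed.

Lemma val_pre_ge n : size g <= n -> (val g <= val (pre q n))%O.
Proof.
move=> le_gn; rewrite -(subnKC le_gn); elim: (n - size g) => [|k IH].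
  by rewrite addn0 q_from_g.
by apply: le_trans IH _; rewrite addnS; apply/val_pre_nondecreasing/leq_addr.
Qed.

Lemma anchored_pre m i : anchored (pre q m) i <->
  [/\ i <= m, forall j, i <= j <= m -> val (pre q j) = val (pre q m) &
      forall j, i <= j < m -> d (pre q j) = X -> q j = tw (pre q i) (pre q j)].
Proof.
rewrite /anchored size_pre; split=> -[le_im val_const moves]; split=> // j.
- by move=> /andP[le_ij le_jm]; rewrite -(val_const j) ?le_ij // take_pre.
- move=> /andP[le_ij lt_jm]; rewrite -(nth_pre c0 q lt_jm) -(take_pre q (ltnW lt_jm)).
  by rewrite -(take_pre q le_im); apply: moves; rewrite le_ij.
- by move=> /andP[le_ij le_jm]; rewrite take_pre ?val_const ?le_ij.
move=> /andP[le_ij lt_jm]; rewrite (nth_pre c0 q lt_jm) (take_pre q (ltnW lt_jm)).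
by rewrite (take_pre q le_im); apply: moves; rewrite le_ij.
Qed.

(* Once val is constant along q, the anchor of the current prefix is still a
   valid anchor one step later. *)
Lemma anchor_pre_nonincreasing N :
  size g <= N -> (forall m, N <= m -> val (pre q m) = val (pre q N)) ->
  forall n, N <= n -> anchor (pre q n.+1) <= anchor (pre q n).
Proof.
move=> le_gN val_const n le_Nn; apply/anchor_min/anchored_pre.
have /anchored_pre [le_an val_an moves] := anchor_anchored (pre q n).
split=> [|j|j]; first exact: leqW.
  move=> /andP[le_aj]; rewrite leq_eqVlt => /orP[/eqP -> //|]; rewrite ltnS => le_jn.
  by rewrite val_an ?le_aj // (val_const n) // (val_const n.+1) // leqW.
move=> /andP[le_aj]; rewrite ltnS leq_eqVlt => /orP[/eqP -> dX|lt_jn]; last first.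
  by apply: moves; rewrite le_aj lt_jn.
by rewrite q_persistent ?(leq_trans le_gN) // /persistent take_pre.
Qed.

Lemma persistent_play_ge : (val g <= v q)%O.
Proof.
have [N le_gN val_const] := nondecreasing_eventually_constant val_pre_nondecreasing.
have [M le_NM anchor_const] :=
  nonincreasing_eventually_constant (anchor_pre_nonincreasing le_gN val_const).
set i := anchor (pre q M) in anchor_const.
have anchored_i m : M <= m -> anchored (pre q m) i.
  by move=> le_Mm; rewrite -(anchor_const m le_Mm); apply: anchor_anchored.
have /anchored_pre [le_iM val_iM _] := anchored_i M (leqnn M).
apply: le_trans (@tw_guarantees (pre q i) q _ _); last 2 first.
- by rewrite size_pre.
- rewrite size_pre => n le_in dX.
  have /anchored_pre [_ _ moves] := anchored_i (maxn M n.+1) (leq_maxl _ _).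
  by apply: moves; rewrite // le_in leq_max ltnSn orbT.
rewrite val_iM ?leqnn ?le_iM // (val_const M le_NM).
exact/val_pre_ge/(leq_trans le_gN).
Qed.

End Play.

Lemma persistent_guarantees g : guarantees d v X g persistent (fun x => val g <= x)%O.
Proof. by move=> q q_from_g q_persistent; apply: persistent_play_ge. Qed.

End Persistent.

Lemma SPE_of_guarantees (C : Type) (d : seq C -> player) (disp : Order.disp_t)
    (O : orderType disp) (v : (nat -> C) -> O) (val : seq C -> O) (sa sb : seq C -> C) :
  (forall g, guarantees d v pa g sa (fun x => val g <= x)%O) ->
  (forall g, guarantees d v pb g sb (fun x => x <= val g)%O) ->
  SPE d v (fun h => match d h with pa => sa h | pb => sb h end).
Proof.
move=> sa_val sb_val [g [X [s better]]].
set sigma := fun h => _ in better.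
have sigma_a h : d h = pa -> sigma h = sa h by rewrite /sigma => ->.
have sigma_b h : d h = pb -> sigma h = sb h by rewrite /sigma => ->.
have deviate_other h : d h <> X -> deviate sigma s h = sigma h.
  by rewrite /deviate; case: player_eq_dec.
have ge_a := guarantees_play (sa_val g) sigma_a.
have le_b := guarantees_play (sb_val g) sigma_b.
case: X s better deviate_other => s better deviate_other /=.
- have le_b' : (v (play g (deviate sigma s)) <= val g)%O.
    apply: guarantees_play (sb_val g) _ => h dh.
    by rewrite deviate_other ?dh // sigma_b.
  by move: (le_lt_trans ge_a (lt_le_trans better le_b')); rewrite ltxx.
- have ge_a' : (val g <= v (play g (deviate sigma s)))%O.
    apply: guarantees_play (sa_val g) _ => h dh.
    by rewrite deviate_other ?dh // sigma_a.
  by move: (le_lt_trans ge_a' (lt_le_trans better le_b)); rewrite ltxx.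
Qed.

Section Value.
Variables (C : Type) (c0 : C) (d : seq C -> player) (disp : Order.disp_t)
  (O : finOrderType disp) (v : (nat -> C) -> O).
Hypothesis guarantees_determined : forall g (O' : {set O}),
  (exists t, guarantees d v pa g t (fun x => x \in O')) \/
  (exists t, guarantees d v pb g t (fun x => x \notin O')).

Definition secures (g : seq C) (o : O) : Prop :=
  exists t, guarantees d v pa g t (fun x => o <= x)%O.

Let bottom : O := [arg min_(o < v (fun _ => c0)) o]%O.

Lemma secures_bottom g : secures g bottom.
Proof.
exists (fun _ => c0) => q _ _; rewrite /bottom.
by case: arg_minP => // o _ min_o; apply: min_o.
Qed.

Definition value (g : seq C) : O :=
  [arg max_(o > bottom | pbool (secures g o)) o]%O.

Lemma value_secured g : secures g (value g).
Proof.
rewrite /value; case: arg_maxP => [|o /pboolP //]; exact/pboolP/secures_bottom.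
Qed.

Lemma value_max g t o : guarantees d v pa g t (fun x => o <= x)%O -> (o <= value g)%O.
Proof.
move=> t_o; rewrite /value; case: arg_maxP => [|o' _ max_o'].
  exact/pboolP/secures_bottom.
by apply/max_o'/pboolP; exists t.
Qed.

(* If a could force an outcome above [value g], it could force the least such
   outcome, contradicting maximality; so by determinacy b forces the rest. *)
Lemma value_secured_b g : exists t, guarantees d v pb g t (fun x => x <= value g)%O.
Proof.
have [[t t_above]|[t t_below]] := guarantees_determined g [set x | (value g < x)%O].
  have play_above : (value g < v (play g t))%O.
    by move: (guarantees_play t_above (fun h _ => erefl)); rewrite inE.
  case: (arg_minP id play_above) => o above_o min_o.
  have : (o <= value g)%O.
    apply: (value_max (t := t)).
    by apply: guarantees_impl t_above => x; rewrite inE; apply: min_o.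
  by rewrite leNgt above_o.
by exists t; apply: guarantees_impl t_below => x; rewrite inE -leNgt.
Qed.

Definition secure_a (g : seq C) : seq C -> C :=
  proj1_sig (constructive_indefinite_description _ (value_secured g)).

Definition secure_b (g : seq C) : seq C -> C :=
  proj1_sig (constructive_indefinite_description _ (value_secured_b g)).

Lemma secure_a_guarantees g : guarantees d v pa g (secure_a g) (fun x => value g <= x)%O.
Proof. by rewrite /secure_a; case: constructive_indefinite_description. Qed.

Lemma secure_b_guarantees g :
  guarantees d (v : _ -> O^d) pb g (secure_b g) (fun x : O^d => (value g : O^d) <= x)%O.
Proof.
rewrite /secure_b; case: constructive_indefinite_description => t /= t_below.
by apply: guarantees_impl t_below => x; rewrite leEdual.
Qed.

Lemma value_min_b g t (o : O^d) :
  guarantees d (v : _ -> O^d) pb g t (fun x : O^d => o <= x)%O -> (o <= (value g : O^d))%O.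
Proof.
move=> t_o; pose sigma h := match d h with pa => secure_a g h | pb => t h end.
have sigma_a h : d h = pa -> sigma h = secure_a g h by rewrite /sigma => ->.
have sigma_b h : d h = pb -> sigma h = t h by rewrite /sigma => ->.
have ge_a := guarantees_play (@secure_a_guarantees g) sigma_a.
have le_o := guarantees_play t_o sigma_b.
by rewrite leEdual; apply: le_trans ge_a _; rewrite -leEdual.
Qed.

Lemma value_guarantees_a :
  forall g, guarantees d v pa g (persistent c0 d pa value secure_a) (fun x => value g <= x)%O.
Proof. exact: persistent_guarantees secure_a_guarantees value_max. Qed.

Lemma value_guarantees_b :
  forall g, guarantees d v pb g (persistent c0 d (O := O^d) pb value secure_b)
                       (fun x => x <= value g)%O.
Proof.
move=> g; have := persistent_guarantees (c0 := c0) secure_b_guarantees value_min_b (g := g).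
by apply: guarantees_impl => x; rewrite leEdual.
Qed.

End Value.

Theorem theorem24 (C : Type) (HC : inhabited C) (d : seq C -> player)
  (disp : Order.disp_t) (O : finOrderType disp) (v : (nat -> C) -> O)
  (Gamma : ((nat -> C) -> Prop) -> Prop)
  (H1 : forall (O' : {set O}) (g : seq C),
          Gamma (fun al => v (prepend g al) \in O'))
  (H2 : forall W : (nat -> C) -> Prop, Gamma W ->
          forall D : seq C -> Prop, determined D W) :
  exists sigma : seq C -> C, SPE d v sigma.
Proof.
case: HC => c0.
have determined_from g (O' : {set O}) :
    (exists t, guarantees d v pa g t (fun x => x \in O')) \/
    (exists t, guarantees d v pb g t (fun x => x \notin O')).
  have [wins|wins] := H2 _ (H1 O' g) (fun h => d (g ++ h) = pa).
    by left; apply: (first_wins_guarantees c0 wins).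
  have [t t_out] := second_wins_guarantees c0 (Q := fun x => x \in O') wins.
  by right; exists t; apply: guarantees_impl t_out => x /negP.
eexists; apply: SPE_of_guarantees.
- exact: value_guarantees_a.
- exact: value_guarantees_b determined_from.
Qed.
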